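(* For all integers $n$ and $\alpha$ such that $n+1\le\alpha\le (\frac n2)^2+\frac n2+1$ if $n$ is even, and $n+1\le\alpha\le(\frac{n-1}2)^2+n+1$ if $n$ is odd, there exists a minimal $n$-state nondeterministic finite automaton accepting a finite language over a binary alphabet whose equivalent minimal deterministic finite automaton has exactly $\alpha$ states.
   Context: NFAs have a single initial state and a transition function $\delta:Q\times\Sigma\to 2^Q$ that may map to the empty set (no sink state is needed or counted); DFAs are complete, so a sink state is counted. A minimal $n$-state NFA is an NFA with $n$ states such that no NFA with fewer states accepts the same language. *)

From mathcomp Require Import all_boot.
Set Implicit Arguments. Unset Strict Implicit. Unset Printing Implicit Defensive.

Definition word := seq bool.
Definition language := word -> bool.

Record nfa (n : nat) := NFA {
  nfa_init : 'I_n;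
  nfa_trans : 'I_n -> bool -> {set 'I_n};
  nfa_final : {set 'I_n} }.

Definition nfa_step n (A : nfa n) (X : {set 'I_n}) (a : bool) : {set 'I_n} :=
  \bigcup_(q in X) nfa_trans A q a.

Definition nfa_reach n (A : nfa n) (w : word) : {set 'I_n} :=
  foldl (nfa_step A) [set nfa_init A] w.

Definition nfa_accept n (A : nfa n) : language :=
  fun w => [exists q, (q \in nfa_final A) && (q \in nfa_reach A w)].

(* Complete DFA with n states (a sink state, if any, is counted). *)
Record dfa (n : nat) := DFA {
  dfa_init : 'I_n;
  dfa_trans : 'I_n -> bool -> 'I_n;
  dfa_final : {set 'I_n} }.

Definition dfa_accept n (D : dfa n) : language :=
  fun w => foldl (dfa_trans D) (dfa_init D) w \in dfa_final D.

Definition same_language (L L' : language) : Prop := forall w, L w = L' w.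

Definition finite_language (L : language) : Prop :=
  exists s : seq word, forall w, L w -> w \in s.

Definition minimal_nfa n (A : nfa n) : Prop :=
  forall m (B : nfa m), same_language (nfa_accept B) (nfa_accept A) -> n <= m.

Definition min_dfa_size (L : language) (k : nat) : Prop :=
  (exists D : dfa k, same_language (dfa_accept D) L) /\
  (forall m (D : dfa m), same_language (dfa_accept D) L -> k <= m).

Definition alpha_bound (n : nat) : nat :=
  if odd n then ((n - 1)./2) ^ 2 + n + 1 else (n./2) ^ 2 + n./2 + 1.

From mathcomp Require Import all_boot zify.
Set Implicit Arguments. Unset Strict Implicit. Unset Printing Implicit Defensive.

(* The witness is the NFA on the states 0 < 1 < ... < n-1, with initial state 0
   and final state n-1, in which every letter advances by one state and the letter
   true may also advance by two from the states q < 2J and q = d.  The states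
   reachable on a word w form the interval [|w|, R(w)], so the longest accepted
   word has length n-1, which forces n states on every equivalent NFA.  Distinct
   reachable intervals are separated by suffixes false^k, so the minimal DFA is
   the subset automaton on the reachable intervals; counting them gives
   1 + (J+1)(n-J) + (n-2-d) states, and as J and d vary these counts fill the
   whole range from n+1 to the bound. *)

Section NFARuns.
Variables (m : nat) (B : nfa m).

Lemma nfa_stepS (X Y : {set 'I_m}) c :
  X \subset Y -> nfa_step B X c \subset nfa_step B Y c.
Proof.
move=> /subsetP sXY; apply/subsetP => q /bigcupP [p pX qp].
by apply/bigcupP; exists p => //; apply: sXY.
Qed.

Lemma nfa_runS w (X Y : {set 'I_m}) :
  X \subset Y -> foldl (nfa_step B) X w \subset foldl (nfa_step B) Y w.
Proof. by elim: w X Y => [//|c w IHw] X Y sXY /=; apply/IHw/nfa_stepS. Qed.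

Lemma nfa_run_from_state w (X : {set 'I_m}) q :
  q \in foldl (nfa_step B) X w ->
  exists2 p, p \in X & q \in foldl (nfa_step B) [set p] w.
Proof.
elim: w X q => [|c w IHw] X q /=; first by exists q; rewrite ?inE.
case/IHw=> p' /bigcupP [p pX p'p] qp'; exists p => //.
have sp' : [set p'] \subset nfa_step B [set p] c.
  by rewrite sub1set; apply/bigcupP; exists p; rewrite ?inE.
exact: subsetP (nfa_runS w sp') q qp'.
Qed.

(* If the states on an accepting run of the longest accepted word w0 were not
   pairwise distinct, cutting out the loop in between would leave a longer
   accepted word. *)
Lemma nfa_states_gt_longest_word (w0 : word) :
  nfa_accept B w0 -> (forall w, nfa_accept B w -> size w <= size w0) ->
  size w0 < m.
Proof.
move=> /existsP [f /andP [fF fw0]] longest; set k := size w0.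
have /fin_all_exists [g gP] (i : 'I_k.+1) : exists p,
    (p \in nfa_reach B (take i w0)) &&
    [exists f, (f \in nfa_final B) && (f \in foldl (nfa_step B) [set p] (drop i w0))].
  move: fw0; rewrite /nfa_reach -[w0 in foldl _ _ w0](cat_take_drop i) foldl_cat.
  case/nfa_run_from_state=> p pR fp; exists p; apply/andP; split=> //.
  by apply/existsP; exists f; rewrite fF.
have g_neq (i j : 'I_k.+1) : i < j -> g i != g j.
  move=> lt_ij; apply/eqP=> eq_g.
  have /andP [_ /existsP [f' /andP [f'F f'i]]] := gP i.
  have /andP [gj _] := gP j.
  have : nfa_accept B (take j w0 ++ drop i w0).
    apply/existsP; exists f'; rewrite f'F /nfa_reach foldl_cat.
    have sgi : [set g i] \subset foldl (nfa_step B) [set nfa_init B] (take j w0).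
      by rewrite sub1set eq_g.
    exact: subsetP (nfa_runS _ sgi) f' f'i.
  move/longest; rewrite size_cat size_take size_drop -/k.
  have := ltn_ord i; have := ltn_ord j; case: ifP; lia.
have g_inj : injective g.
  move=> i j eq_g; case: (ltngtP i j) => [lt_ij|lt_ji|/val_inj //].
  - by have := g_neq _ _ lt_ij; rewrite eq_g eqxx.
  - by have := g_neq _ _ lt_ji; rewrite eq_g eqxx.
by have := leq_card g g_inj; rewrite !card_ord.
Qed.

End NFARuns.

Section SubsetDFA.
Variables (n : nat) (A : nfa n) (R : seq {set 'I_n}) (k : nat).

Definition subset_index (X : {set 'I_n}) : 'I_k.+1 := inord (index X R).

Definition subset_dfa : dfa k.+1 :=
  DFA (subset_index [set nfa_init A])
      (fun i c => subset_index (nfa_step A (nth set0 R i) c))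
      [set i : 'I_k.+1 | [exists q, (q \in nfa_final A) && (q \in nth set0 R i)]].

Hypothesis size_R : size R = k.+1.
Hypothesis init_in_R : [set nfa_init A] \in R.
Hypothesis step_in_R : {in R, forall X c, nfa_step A X c \in R}.

Lemma nth_subset_index X : X \in R -> nth set0 R (subset_index X) = X.
Proof. by move=> XR; rewrite /subset_index inordK ?nth_index // -size_R index_mem. Qed.

Lemma subset_dfa_run u :
  nth set0 R (foldl (dfa_trans subset_dfa) (dfa_init subset_dfa) u) = nfa_reach A u.
Proof.
elim/last_ind: u => [|u c IHu]; first exact: nth_subset_index.
rewrite /nfa_reach !foldl_rcons /= nth_subset_index IHu //.
by rewrite -IHu; apply: step_in_R; rewrite mem_nth // size_R.
Qed.

Lemma subset_dfa_correct : same_language (dfa_accept subset_dfa) (nfa_accept A).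
Proof. by move=> u; rewrite /dfa_accept inE subset_dfa_run. Qed.

End SubsetDFA.

Definition nerode_equiv (L : language) (u v : word) : Prop :=
  forall z, L (u ++ z) = L (v ++ z).

Lemma nerode_inequivalent_size_le (L : language) m (D : dfa m) (W : seq word) :
  same_language (dfa_accept D) L -> uniq W ->
  {in W &, forall u v, nerode_equiv L u v -> u = v} -> size W <= m.
Proof.
move=> DL uW W_sep; set st := foldl (dfa_trans D) (dfa_init D).
have st_inj : {in W &, injective st}.
  move=> u v uW' vW eq_st; apply: W_sep => // z.
  by rewrite -!DL /dfa_accept !foldl_cat -/(st u) -/(st v) eq_st.
rewrite -(size_map st) -(card_uniqP _); last by rewrite map_inj_in_uniq.
by rewrite (leq_trans (max_card _)) ?card_ord.
Qed.

Lemma bounded_length_finite (L : language) K :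
  (forall w, L w -> size w <= K) -> finite_language L.
Proof.
move=> LK; exists (flatten [seq [seq val t | t : k.-tuple bool] | k <- iota 0 K.+1]).
move=> w /LK le_wK; apply/flatten_mapP; exists (size w); first by rewrite mem_iota.
by apply/mapP; exists (in_tuple w); rewrite ?mem_enum.
Qed.

Lemma sumn_sub_double_iota n J : 2 * J <= n ->
  sumn [seq n - 2 * j | j <- iota 0 J.+1] = J.+1 * (n - J).
Proof.
elim: J => [|J IHJ] le_Jn; first by rewrite /=; lia.
rewrite -[J.+2]addn1 iotaD map_cat sumn_cat IHJ /=; last lia.
have [p ->] : exists p, n = p + 2 * J.+1 by exists (n - 2 * J.+1); lia.
have -> : p + 2 * J.+1 - J = p + J.+2 by lia.
have -> : p + 2 * J.+1 - 2 * (0 + J.+1) + 0 = p by lia.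
have -> : p + 2 * J.+1 - J.+1 = p + J.+1 by lia.
nia.
Qed.

Section WitnessNFA.
Variables (n J d : nat).
Hypothesis n_gt0 : 0 < n.

Definition skips (q : nat) : bool := (q < 2 * J) || (q == d).

Definition reach_top (r : nat) (w : word) : nat :=
  foldl (fun r (c : bool) => r + 1 + (c && skips r)) r w.

Definition witness_nfa : nfa n :=
  NFA (Ordinal n_gt0)
    (fun q c => [set q' : 'I_n | (q' == q.+1 :> nat) || [&& c, skips q & q' == q.+2 :> nat]])
    [set q : 'I_n | q == n.-1 :> nat].

Definition interval_set (t r : nat) : {set 'I_n} := [set q : 'I_n | t <= q <= r].

Lemma reach_top_ge r w : r + size w <= reach_top r w.
Proof.
elim: w r => [|c w IHw] r /=; first by rewrite addn0.
by have := IHw (r + 1 + (c && skips r)); lia.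
Qed.

Lemma reach_top_cat r u v : reach_top r (u ++ v) = reach_top (reach_top r u) v.
Proof. exact: foldl_cat. Qed.

Lemma reach_top_rcons r u c :
  reach_top r (rcons u c) = reach_top r u + 1 + (c && skips (reach_top r u)).
Proof. exact: foldl_rcons. Qed.

Lemma reach_top_falses r k : reach_top r (nseq k false) = r + k.
Proof. by elim: k r => [|k IHk] r /=; rewrite ?addn0 ?IHk; lia. Qed.

Lemma reach_top_trues k : k <= J -> reach_top 0 (nseq k true) = 2 * k.
Proof.
elim: k => [//|k IHk] le_kJ.
rewrite -addn1 nseqD cats1 reach_top_rcons IHk /skips; last lia.
by rewrite (_ : 2 * k < 2 * J) /=; lia.
Qed.

Lemma witness_step_interval t r c : t <= r ->
  nfa_step witness_nfa (interval_set t r) c = interval_set t.+1 (r + 1 + (c && skips r)).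
Proof.
move=> le_tr; apply/setP => q'; rewrite !inE; apply/bigcupP/idP.
  case=> q; rewrite !inE => /andP [tq qr] /orP [/eqP ->|/and3P [-> sq /eqP ->]].
    by case: (c && skips r); lia.
  case: (ltngtP q r) => [lt_qr|lt_rq|eq_qr]; [lia | lia | by rewrite -eq_qr sq; lia].
move=> /andP [tq' q'r]; case: (leqP q' r.+1) => [q'r1|rq'].
  have lt_q'n : q'.-1 < n by have := ltn_ord q'; lia.
  exists (Ordinal lt_q'n); rewrite !inE /=; first lia.
  by apply/orP; left; apply/eqP; lia.
have lt_rn : r < n by have := ltn_ord q'; lia.
exists (Ordinal lt_rn); rewrite !inE /=; first lia.
by move: q'r rq'; case: c; case: (skips r) => /=; lia.
Qed.

Lemma witness_reach w : nfa_reach witness_nfa w = interval_set (size w) (reach_top 0 w).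
Proof.
elim/last_ind: w => [|u c IHu].
  by apply/setP => q; rewrite !inE -val_eqE /=; lia.
rewrite /nfa_reach foldl_rcons -/(nfa_reach _ u) IHu witness_step_interval.
  by rewrite size_rcons reach_top_rcons addn1.
by have := reach_top_ge 0 u.
Qed.

Lemma witness_accept w :
  nfa_accept witness_nfa w = (size w <= n.-1 <= reach_top 0 w).
Proof.
rewrite /nfa_accept witness_reach; apply/existsP/idP.
  by case=> q; rewrite !inE => /andP [/eqP ->].
have lt_n1n : n.-1 < n by lia.
by exists (Ordinal lt_n1n); rewrite !inE /= eqxx.
Qed.

(* A suffix of letters false moves every interval rigidly, so it tests
   membership of a single state. *)
Lemma witness_nerode_reach u v :
  nerode_equiv (nfa_accept witness_nfa) u v ->
  nfa_reach witness_nfa u = nfa_reach witness_nfa v.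
Proof.
move=> uv; apply/setP => q; have := uv (nseq (n.-1 - q) false).
rewrite !witness_accept !witness_reach !inE !size_cat !reach_top_cat !reach_top_falses.
by rewrite size_nseq; have := ltn_ord q; lia.
Qed.

Lemma witness_nfa_minimal : minimal_nfa witness_nfa.
Proof.
move=> m B BA; have accB w : nfa_accept B w -> size w <= n.-1.
  by rewrite BA witness_accept => /andP [].
have accB0 : nfa_accept B (nseq n.-1 false).
  by rewrite BA witness_accept size_nseq reach_top_falses leqnn.
have := nfa_states_gt_longest_word accB0; rewrite size_nseq.
by move/(_ accB); lia.
Qed.

(* A pair (t, r) stands for the interval of states [t, r], the pair (n, n)
   for the empty set; clamping is the normalisation after a step. *)
Definition clamp_interval (t r : nat) : nat * nat :=
  if n <= t then (n, n) else (t, minn r n.-1).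

Definition reachable_interval (x : nat * nat) : bool :=
  ((x.1 == n) && (x.2 == n)) ||
  [&& x.1 <= x.2, x.2 < n & ((x.2 <= x.1 + J) && (x.2 <= 2 * x.1)) ||
                            ((x.2 == x.1 + J.+1) && (d + 2 <= x.2))].

Hypothesis dJ_lt_d : 2 * J + 1 <= d.
Hypothesis dJ_lt_n : 2 * J + 1 <= n.

Lemma reachable_interval_step t r c : reachable_interval (t, r) ->
  reachable_interval (clamp_interval t.+1 (r + 1 + (c && skips r))).
Proof.
rewrite /reachable_interval /clamp_interval /skips /=.
case: (leqP n t.+1) => /= [_|lt_tn]; first by rewrite !eqxx.
by case: c => /=; lia.
Qed.

Definition narrow_intervals : seq (nat * nat) :=
  [seq (t, t + j) | j <- iota 0 J.+1, t <- iota j (n - 2 * j)].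

Definition wide_intervals : seq (nat * nat) :=
  [seq (t, t + J.+1) | t <- iota (d - J + 1) (n - 2 - d)].

Definition reachable_intervals : seq (nat * nat) :=
  (n, n) :: narrow_intervals ++ wide_intervals.

Lemma mem_narrow_intervals x :
  (x \in narrow_intervals) = [&& x.1 <= x.2, x.2 < n, x.2 <= x.1 + J & x.2 <= 2 * x.1].
Proof.
apply/allpairsPdep/idP.
  by case=> j [t [+ + ->]]; rewrite !mem_iota /=; lia.
case: x => t r /= x_narrow; exists (r - t), t.
by split; rewrite ?in_cons ?mem_iota; try lia; congr pair; lia.
Qed.

Lemma mem_wide_intervals x :
  (x \in wide_intervals) = [&& x.2 < n, x.2 == x.1 + J.+1 & d + 2 <= x.2].
Proof.
apply/mapP/idP; first by case=> t + ->; rewrite mem_iota /=; lia.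
by case: x => t r /= x_wide; exists t; rewrite ?mem_iota; [lia | congr pair; lia].
Qed.

Lemma mem_reachable_intervals x :
  (x \in reachable_intervals) = reachable_interval x.
Proof.
rewrite in_cons mem_cat mem_narrow_intervals mem_wide_intervals /reachable_interval.
by case: x => t r /=; rewrite xpair_eqE; lia.
Qed.

Lemma uniq_reachable_intervals : uniq reachable_intervals.
Proof.
rewrite /= mem_cat mem_narrow_intervals mem_wide_intervals cat_uniq.
apply/and4P; split.
- by rewrite /= ltnn andbF.
- rewrite /narrow_intervals; apply: allpairs_uniq_dep => [|j _|[j1 t1] [j2 t2] _ _ /= [eq_t eq_r]].
  + exact: iota_uniq.
  + exact: iota_uniq.
  + have eq_j : j1 = j2 by lia.
    by subst j2 t2.
- by apply/hasPn => x; rewrite mem_narrow_intervals mem_wide_intervals; lia.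
- by rewrite map_inj_uniq ?iota_uniq // => t1 t2 [].
Qed.

Lemma size_reachable_intervals :
  size reachable_intervals = 1 + J.+1 * (n - J) + (n - 2 - d).
Proof.
rewrite /= size_cat size_map size_iota size_allpairs_dep.
rewrite (eq_map (fun j => size_iota j (n - 2 * j))) sumn_sub_double_iota; lia.
Qed.

(* A word leading to the interval x: its r - t skips are taken as early as
   possible, the (J+1)-st one necessarily from the state d. *)
Definition interval_word (x : nat * nat) : word :=
  if x.1 == n then nseq n false
  else if x.2 - x.1 <= J then nseq (x.2 - x.1) true ++ nseq (x.1 - (x.2 - x.1)) false
  else nseq J true ++ nseq (d - 2 * J) false ++ true :: nseq (x.1 - (d - J + 1)) false.

Lemma interval_word_spec x : reachable_interval x ->
  size (interval_word x) = x.1 /\ reach_top 0 (interval_word x) = x.2.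
Proof.
case: x => t r; rewrite /reachable_interval /interval_word /=.
case: eqP => [-> /orP [/andP [_ /eqP ->]|]|ne_tn /= x_reach].
- by rewrite size_nseq reach_top_falses.
- lia.
case: ifP => le_rtJ; rewrite !size_cat !size_nseq !reach_top_cat reach_top_trues //.
  by rewrite reach_top_falses; split; lia.
rewrite -cat1s reach_top_cat !reach_top_falses /= /skips size_nseq.
have -> : 2 * J + (d - 2 * J) = d by lia.
by rewrite eqxx orbT; split; lia.
Qed.

Lemma interval_set_clamp t r : t <= r ->
  interval_set (clamp_interval t r).1 (clamp_interval t r).2 = interval_set t r.
Proof.
move=> le_tr; apply/setP => q; rewrite /clamp_interval !inE; have := ltn_ord q.
by case: (leqP n t) => /=; lia.
Qed.

Lemma interval_set_inj x y : reachable_interval x -> reachable_interval y ->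
  interval_set x.1 x.2 = interval_set y.1 y.2 -> x = y.
Proof.
case: x => t r; case: y => t' r'; rewrite /reachable_interval /= => x_reach y_reach eq_xy.
have mem k : k < n -> (t <= k <= r) = (t' <= k <= r').
  by move=> lt_kn; move/setP: eq_xy => /(_ (Ordinal lt_kn)); rewrite !inE.
case/orP: x_reach => [/andP [/eqP eq_t /eqP eq_r]|x_reach].
  case/orP: y_reach => [/andP [/eqP -> /eqP ->]|y_reach]; first by rewrite eq_t eq_r.
  by have := mem t'; lia.
case/orP: y_reach => [/andP [/eqP eq_t' /eqP eq_r']|y_reach]; first by have := mem t; lia.
have := mem t; have := mem t'; have := mem r; have := mem r'.
by move=> mem_r' mem_r mem_t' mem_t; congr pair; lia.
Qed.

Lemma reach_interval_word x : reachable_interval x ->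
  nfa_reach witness_nfa (interval_word x) = interval_set x.1 x.2.
Proof. by case/interval_word_spec => size_w top_w; rewrite witness_reach size_w top_w. Qed.

Lemma reach_interval_word_inj x y : reachable_interval x -> reachable_interval y ->
  nfa_reach witness_nfa (interval_word x) = nfa_reach witness_nfa (interval_word y) ->
  x = y.
Proof.
move=> x_reach y_reach; rewrite !reach_interval_word //.
exact: interval_set_inj.
Qed.

Lemma witness_min_dfa_size :
  min_dfa_size (nfa_accept witness_nfa) (1 + J.+1 * (n - J) + (n - 2 - d)).
Proof.
split.
  pose R := [seq interval_set x.1 x.2 | x <- reachable_intervals].
  exists (subset_dfa witness_nfa R (J.+1 * (n - J) + (n - 2 - d))).
  apply: subset_dfa_correct.
  - by rewrite size_map size_reachable_intervals.
  - have -> : [set nfa_init witness_nfa] = interval_set 0 0 by apply: (witness_reach [::]).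
    by apply/mapP; exists (0, 0); rewrite // mem_reachable_intervals /reachable_interval /= n_gt0 orbT.
  - move=> _ /mapP [[t r] x_reach ->] c; apply/mapP.
    rewrite mem_reachable_intervals in x_reach.
    exists (clamp_interval t.+1 (r + 1 + (c && skips r))).
      by rewrite mem_reachable_intervals reachable_interval_step.
    have le_tr : t <= r by move: x_reach; rewrite /reachable_interval /=; lia.
    by rewrite witness_step_interval // interval_set_clamp //; lia.
move=> m D DA; rewrite -size_reachable_intervals -(size_map interval_word).
apply: (nerode_inequivalent_size_le DA).
  rewrite map_inj_in_uniq ?uniq_reachable_intervals // => x y.
  rewrite !mem_reachable_intervals => x_reach y_reach eq_w.
  by apply: reach_interval_word_inj; rewrite ?eq_w.
move=> _ _ /mapP [x x_reach ->] /mapP [y y_reach ->] /witness_nerode_reach.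
rewrite !mem_reachable_intervals in x_reach y_reach.
by move/(reach_interval_word_inj x_reach y_reach) ->.
Qed.

End WitnessNFA.

Lemma alpha_bound_witness n : 1 <= n ->
  exists2 J, 2 * J + 1 <= n & alpha_bound n = 1 + J.+1 * (n - J).
Proof.
move=> n_gt0; rewrite /alpha_bound; case: ifP => odd_n.
  exists (n - 1)./2; first lia.
  set k := (n - 1)./2; have -> : n = k * 2 + 1 by lia.
  have -> : k * 2 + 1 - k = k.+1 by lia.
  by rewrite expnS expn1; nia.
exists n./2.-1; first lia.
set k := n./2; have -> : n = k * 2 by lia.
have -> : k * 2 - k.-1 = k.+1 by lia.
by rewrite expnS expn1 prednK; [nia | lia].
Qed.

(* Raising d by one lowers the count by one, and the lowest count with J + 1
   skips is one above the highest count with J skips: the counts form an interval. *)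
Lemma witness_sizes_cover n K alpha : 2 * K + 1 <= n ->
  n + 1 <= alpha <= 1 + K.+1 * (n - K) ->
  exists J d, [/\ 2 * J + 1 <= n, 2 * J + 1 <= d & alpha = 1 + J.+1 * (n - J) + (n - 2 - d)].
Proof.
elim: K => [|K IHK] le_Kn /andP [lo_alpha hi_alpha].
  by exists 0, (maxn (n - 2) 1); split; lia.
case: (leqP alpha (1 + K.+1 * (n - K))) => [le_alpha|gt_alpha].
  by apply: IHK; lia.
have step_K : K.+2 * (n - K.+1) = K.+1 * (n - K) + (n - 2 * K - 2).
  have [p ->] : exists p, n = p + 2 * K.+1 + 1 by exists (n - 2 * K.+1 - 1); lia.
  have -> : p + 2 * K.+1 + 1 - K.+1 = p + K.+2 by lia.
  have -> : p + 2 * K.+1 + 1 - K = p + K.+3 by lia.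
  have -> : p + 2 * K.+1 + 1 - 2 * K - 2 = p + 1 by lia.
  nia.
case: (ltnP alpha (1 + K.+2 * (n - K.+1))) => [lt_alpha|ge_alpha].
  by exists K, (n - 2 - (alpha - 1 - K.+1 * (n - K))); split; lia.
by exists K.+1, (maxn (n - 2) (2 * K.+1 + 1)); split; lia.
Qed.

Theorem mainTheorem10 (n alpha : nat) :
  1 <= n -> n + 1 <= alpha -> alpha <= alpha_bound n ->
  exists A : nfa n,
    [/\ minimal_nfa A, finite_language (nfa_accept A)
      & min_dfa_size (nfa_accept A) alpha].
Proof.
move=> n_gt0 lo_alpha hi_alpha; have [K le_Kn eq_bound] := alpha_bound_witness n_gt0.
have bounds : n + 1 <= alpha <= 1 + K.+1 * (n - K) by rewrite lo_alpha -eq_bound.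
have [J [d [le_Jn le_Jd ->]]] := witness_sizes_cover le_Kn bounds.
exists (witness_nfa J d n_gt0); split.
- exact: witness_nfa_minimal.
- apply: (bounded_length_finite (K := n.-1)) => w.
  by rewrite witness_accept => /andP [].
- exact: witness_min_dfa_size.
Qed.
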